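(* If $\Sigma$ is of type $\mathfrak a_l$ ($l\ge1$) and $\Gamma=Z_{\widetilde M}(\widetilde K)$ ($\cong\mathbb Z_{l+1}$), then $$d(P_\Gamma)=\frac{\sqrt6}{6}(\psi,\psi)^{-1/2}\,l^{1/2}(l+2)^{1/2}(l+1)^{-1/2}.$$
   Context: Let $(\mathfrak u,\theta,\langle,\rangle)$ be a reduced, compact, irreducible orthogonal involutive Lie algebra ($\mathfrak u=\mathfrak k_0\oplus\mathfrak p_*$ the $\pm1$ eigenspaces of $\theta$), $\widetilde U$ the simply connected group of $\mathfrak u$, $\widetilde K$ the fixed group of the induced involution, $\widetilde M=\widetilde U/\widetilde K$, $\widetilde{\mathrm{Exp}}(X)=\widetilde\exp(X)\widetilde K$ ($X\in\mathfrak p_*$), and $Z_{\widetilde M}(\widetilde K)$ the group of points of $\widetilde M$ fixed by all left translations by $\widetilde K$. $(\cdot,\cdot)$ is the Killing form of $\mathfrak u\otimes\mathbb C$, positive definite on $\mathfrak h_{\mathfrak p_0}=\sqrt{-1}\mathfrak h_{\mathfrak p_*}$ ($\mathfrak h_{\mathfrak p_*}$ maximal abelian in $\mathfrak p_*$); $\Sigma\subset\mathfrak h_{\mathfrak p_0}$ is the restricted root system with simple roots $\gamma_1,\dots,\gamma_l$ and highest root $\psi=\sum d_i\gamma_i$; $e_j$ defined by $(e_j,\gamma_i)=\delta_{ij}/d_j$; $\triangle=\{x:(x,\gamma_i)\ge0\ \forall i,\ (x,\psi)\le1\}$; $P_\Gamma=\{x\in\triangle:(x,e_i)\le\frac12(e_i,e_i)$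 for all $i$ with $\widetilde{\mathrm{Exp}}(\pi\sqrt{-1}e_i)\in\Gamma\}$; $d(P_\Gamma)=\max_{x\in P_\Gamma}(x,x)^{1/2}$. *)

(* real closed field R, Euclidean space 'rV[R]_l with the
   standard dot product, used as a coordinate model of (h_p0, (.,.)). *)
From HB Require Import structures.
From mathcomp Require Import all_boot all_order all_algebra.
Set Implicit Arguments. Unset Strict Implicit. Unset Printing Implicit Defensive.
Import Order.TTheory GRing.Theory Num.Theory.
Local Open Scope ring_scope.

Definition dotv (R : rcfType) (l : nat) (x y : 'rV[R]_l) : R :=
  \sum_(i < l) x 0 i * y 0 i.

(* Gram matrix of the simple roots of a root system of type a_l
   (Dynkin diagram a chain): (g_i,g_i) = 2c, (g_i,g_{i+1}) = -c, else 0. *)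
Definition typeA_gram (R : rcfType) (l : nat) (c : R) (i j : 'I_l) : R :=
  if i == j then 2 * c
  else if ((i.+1 == j) || (j.+1 == i))%N then - c else 0.

Definition simple_roots_typeA (R : rcfType) (l : nat) (gamma : 'I_l -> 'rV[R]_l) :=
  exists2 c : R, 0 < c & forall i j, dotv (gamma i) (gamma j) = typeA_gram c i j.

Definition alcove (R : rcfType) (l : nat) (gamma : 'I_l -> 'rV[R]_l) (psi : 'rV[R]_l)
  (x : 'rV[R]_l) : Prop :=
  (forall i, 0 <= dotv x (gamma i)) /\ dotv x psi <= 1.

(* P_Gamma, where inG i  means  Exp(pi sqrt(-1) e_i) \in Gamma *)
Definition P_Gamma (R : rcfType) (l : nat) (gamma : 'I_l -> 'rV[R]_l) (psi : 'rV[R]_l)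
  (e : 'I_l -> 'rV[R]_l) (inG : pred 'I_l) (x : 'rV[R]_l) : Prop :=
  alcove gamma psi x /\ (forall i, inG i -> dotv x (e i) <= dotv (e i) (e i) / 2).

Definition is_max_norm (R : rcfType) (l : nat) (P : 'rV[R]_l -> Prop) (r : R) : Prop :=
  (exists x, P x /\ Num.sqrt (dotv x x) = r) /\
  (forall x, P x -> Num.sqrt (dotv x x) <= r).

(* In type a_l all marks d_i are 1, so the alcove is the simplex with vertices
   0, e_1, ..., e_l, and the conditions defining P_Gamma say that x is at least
   as close to 0 as to every e_i.  The barycentre z = (e_1 + ... + e_l)/(l+1)
   is equidistant from all vertices, (z, e_i) = (e_i, e_i)/2: pairing with the
   gamma_k acts on gamma-coordinates as c times minus the second difference,
   so z and the e_i have as gamma-coordinates the solutions of discrete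
   Dirichlet problems (a quadratic and Green's functions).  For x in P_Gamma,
   x pairs nonnegatively with every gamma_k and z - x with every e_k, hence
   (x, z - x) >= 0 and |x| <= |z|.  Finally |z|^2 = l(l+2)/(12c(l+1)) and
   (psi, psi) = 2c. *)

From HB Require Import structures.
From mathcomp Require Import all_boot all_order all_algebra.
From mathcomp Require Import ring lra zify.
Import Order.TTheory GRing.Theory Num.Theory.
Local Open Scope ring_scope.
Set Implicit Arguments.
Unset Strict Implicit.

Lemma sum_mul_delta (R : pzSemiRingType) (I : finType) (F : I -> R) (i : I) :
  \sum_j F j * (if j == i then 1 else 0) = F i.
Proof.
rewrite (bigD1 i) //= eqxx mulr1 big1 ?addr0 // => j /negbTE ->.
by rewrite mulr0.
Qed.

Lemma sum_mul_nat_delta (R : pzSemiRingType) n (F : nat -> R) a : (a < n)%N ->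
  \sum_(m < n) F m * ((m : nat) == a)%:R = F a.
Proof.
move=> lt_an; rewrite (bigD1 (Ordinal lt_an)) //= eqxx mulr1 big1 ?addr0 // => m.
by rewrite -val_eqE /= => /negbTE ->; rewrite mulr0.
Qed.

Section DotProduct.
Variables (R : rcfType) (l : nat).
Implicit Types x y z : 'rV[R]_l.

Lemma dotvC x y : dotv x y = dotv y x.
Proof. by apply: eq_bigr => i _; rewrite mulrC. Qed.

Lemma dotvBl x y z : dotv (x - y) z = dotv x z - dotv y z.
Proof. by rewrite /dotv -sumrB; apply: eq_bigr => i _; rewrite !mxE mulrBl. Qed.

Lemma dotvBr x y z : dotv x (y - z) = dotv x y - dotv x z.
Proof. by rewrite dotvC dotvBl !(dotvC x). Qed.

Lemma dotv_suml (I : finType) (a : I -> R) (g : I -> 'rV[R]_l) y :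
  dotv (\sum_j a j *: g j) y = \sum_j a j * dotv (g j) y.
Proof.
rewrite /dotv (eq_bigr (fun i => \sum_j a j * (g j 0 i * y 0 i))); last first.
  by move=> i _; rewrite summxE mulr_suml; apply: eq_bigr => j _; rewrite mxE mulrA.
by rewrite exchange_big; apply: eq_bigr => j _; rewrite mulr_sumr.
Qed.

Lemma dotv_sumr (I : finType) (g : I -> 'rV[R]_l) x :
  dotv x (\sum_j g j) = \sum_j dotv x (g j).
Proof.
rewrite dotvC -(eq_bigr _ (fun j _ => scale1r (g j))) dotv_suml.
by apply: eq_bigr => j _; rewrite mul1r dotvC.
Qed.

Lemma dotv_ge0 x : 0 <= dotv x x.
Proof. by apply: sumr_ge0 => i _; rewrite -expr2 sqr_ge0. Qed.

(* From 0 <= (z - x, z - x) = (z, z) - 2 (x, z) + (x, x) and (x, x) <= (x, z). *)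
Lemma dotv_le_of_dotvB_ge0 x z : 0 <= dotv x (z - x) -> dotv x x <= dotv z z.
Proof.
have := dotv_ge0 (z - x); rewrite dotvBl !dotvBr (dotvC z x).
lra.
Qed.

End DotProduct.

Lemma is_max_norm_sqrt (R : rcfType) l (P : 'rV[R]_l -> Prop) z :
  P z -> (forall x, P x -> dotv x x <= dotv z z) -> is_max_norm P (Num.sqrt (dotv z z)).
Proof.
move=> Pz z_max; split; first by exists z.
by move=> x Px; rewrite ler_sqrt ?dotv_ge0 ?z_max.
Qed.

Section DualBases.
Variables (R : rcfType) (l : nat) (gamma e : 'I_l -> 'rV[R]_l).
Hypothesis he : forall i j, dotv (e j) (gamma i) = (if i == j then 1 else 0).

Lemma dual_expansion x : x = \sum_k dotv x (gamma k) *: e k.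
Proof.
pose E := \matrix_(j, k) e j 0 k; pose G := \matrix_(i, k) gamma i 0 k.
have EG : E *m G^T = 1%:M.
  apply/matrixP => j i; rewrite !mxE.
  transitivity (dotv (e j) (gamma i)); first by apply: eq_bigr => k _; rewrite !mxE.
  by rewrite he eq_sym; case: eqP.
rewrite -[LHS]mulmx1 -(mulmx1C EG) mulmxA mulmx_sum_row.
apply: eq_bigr => k _; congr (_ *: _).
  by rewrite !mxE; apply: eq_bigr => i _; rewrite !mxE.
by apply/rowP => a; rewrite !mxE.
Qed.

Lemma dual_coords_inj x y :
  (forall k, dotv x (gamma k) = dotv y (gamma k)) -> x = y.
Proof.
move=> eq_xy; rewrite (dual_expansion x) (dual_expansion y).
by apply: eq_bigr => k _; rewrite eq_xy.
Qed.

Lemma dotv_sum_gamma_dual (a : 'I_l -> R) i :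
  dotv (\sum_j a j *: gamma j) (e i) = a i.
Proof.
by rewrite dotv_suml -[RHS](sum_mul_delta a); apply: eq_bigr => j _; rewrite dotvC he.
Qed.

Lemma dotv_sum_dual_gamma (a : 'I_l -> R) k :
  dotv (\sum_j a j *: e j) (gamma k) = a k.
Proof.
rewrite dotv_suml -[RHS](sum_mul_delta a); apply: eq_bigr => j _.
by rewrite he eq_sym.
Qed.

Lemma dotv_ge0_dual_cones x y :
  (forall k, 0 <= dotv x (gamma k)) -> (forall k, 0 <= dotv y (e k)) ->
  0 <= dotv x y.
Proof.
move=> x_ge0 y_ge0; rewrite (dual_expansion x) dotv_suml.
by apply: sumr_ge0 => k _; apply: mulr_ge0; rewrite // dotvC.
Qed.

Lemma dotv_le_dual_cone x z :
  (forall k, 0 <= dotv x (gamma k)) -> (forall k, dotv x (e k) <= dotv z (e k)) ->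
  dotv x x <= dotv z z.
Proof.
move=> x_ge0 le_xz; apply: dotv_le_of_dotvB_ge0; apply: dotv_ge0_dual_cones => // k.
by rewrite dotvBl subr_ge0 le_xz.
Qed.

End DualBases.

Section DirichletProblem.
Variable R : numFieldType.

(* Green's function of the second difference on {0, ..., n} with zero
   boundary values and pole at p. *)
Definition green (n p m : nat) : R :=
  if (m <= p)%N then m%:R * (n%:R - p%:R) / n%:R else p%:R * (n%:R - m%:R) / n%:R.

Definition quad (n m : nat) : R := m%:R * (n%:R - m%:R) / 2.

Lemma green_ge n p m : (p <= m)%N -> green n p m = p%:R * (n%:R - m%:R) / n%:R.
Proof.
rewrite /green; case: ifP => // le_mp le_pm.
by have -> : m = p by lia.
Qed.

Lemma green0 n p : green n p 0 = 0.
Proof. by rewrite /green !mul0r. Qed.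

Lemma green_id n p : (p <= n)%N -> green n p n = 0.
Proof. by move=> le_pn; rewrite green_ge // subrr mulr0 mul0r. Qed.

Lemma green_diff2 n p m : (0 < n)%N ->
  2 * green n p m.+1 - green n p m - green n p m.+2 = (m.+1 == p)%:R.
Proof.
move=> n_gt0; have n_neq0 : n%:R != 0 :> R by rewrite pnatr_eq0 -lt0n.
case: (ltngtP m.+1 p) => [lt_mp | lt_pm | <-].
- rewrite /green !ifT /=; try lia.
  by rewrite -!natr1; field.
- by rewrite !green_ge /=; try lia; rewrite -!natr1; field.
- rewrite (@green_ge n m.+1 m.+2) // /green !ifT //=.
  by rewrite -!natr1; field.
Qed.

Lemma quad0 n : quad n 0 = 0.
Proof. by rewrite /quad !mul0r. Qed.

Lemma quad_id n : quad n n = 0.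
Proof. by rewrite /quad subrr mulr0 mul0r. Qed.

Lemma quad_diff2 n m : 2 * quad n m.+1 - quad n m - quad n m.+2 = 1.
Proof. by rewrite /quad -!natr1; field. Qed.

Lemma sum_quad l :
  \sum_(k < l) quad l.+1 k.+1 = l%:R * l.+1%:R * l.+2%:R / 12.
Proof.
suff sum_gen (x : R) n : \sum_(k < n) k.+1%:R * (x - k.+1%:R) / 2 =
    n%:R * n.+1%:R * (3 * x - 2 * n%:R - 1) / 12.
  by rewrite sum_gen -[l.+2]addn1 -[l.+1]addn1 !natrD; congr (_ / _); ring.
elim: n => [|n IH]; first by rewrite big_ord0 !mul0r.
by rewrite big_ord_recr /= IH -!natr1; field.
Qed.

End DirichletProblem.

(* Barycentre of the simplex 0, v_0, ..., v_(l-1); for v = e in type a_l this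
   simplex is the alcove. *)
Definition simplex_barycenter (R : rcfType) (l : nat) (v : 'I_l -> 'rV[R]_l) : 'rV[R]_l :=
  l.+1%:R^-1 *: \sum_i v i.

Section TypeA.
Variables (R : rcfType) (l : nat) (gamma e : 'I_l -> 'rV[R]_l) (c : R).
Hypotheses (c_gt0 : 0 < c)
  (hg : forall i j, dotv (gamma i) (gamma j) = typeA_gram c i j)
  (he : forall i j, dotv (e j) (gamma i) = (if i == j then 1 else 0)).

Let c_neq0 : c != 0. Proof. by rewrite lt0r_neq0. Qed.

Lemma typeA_gramE (j k : 'I_l) : typeA_gram c j k =
  c * (2 * (j.+1 == k.+1)%:R - (j.+1 == k)%:R - (j.+1 == k.+2)%:R).
Proof.
rewrite /typeA_gram -val_eqE /= !eqSS.
by repeat case: eqP => ? /=; try (exfalso; lia); ring.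
Qed.

(* The Gram matrix is c times the Cartan matrix, so pairing with gamma_k
   turns gamma-coordinates U(j+1)/c into minus the second difference of U. *)
Lemma dotv_typeA_diff2 (U : nat -> R) (k : 'I_l) : U 0%N = 0 -> U l.+1 = 0 ->
  dotv (\sum_(j < l) (U j.+1 / c) *: gamma j) (gamma k) = 2 * U k.+1 - U k - U k.+2.
Proof.
move=> U0 Ul; rewrite dotv_suml.
pose D (m : nat) : R := 2 * (m == k.+1)%:R - (m == k)%:R - (m == k.+2)%:R.
rewrite (eq_bigr (fun j : 'I_l => U j.+1 * D j.+1)); last first.
  by move=> j _; rewrite hg typeA_gramE /D; field.
have -> : \sum_(j < l) U j.+1 * D j.+1 = \sum_(m < l.+2) U m * D m.
  by rewrite big_ord_recr big_ord_recl /= U0 Ul !mul0r add0r addr0.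
rewrite /D (eq_bigr (fun m : 'I_l.+2 => 2 * (U m * (m == k.+1 :> nat)%:R)
    - U m * (m == k :> nat)%:R - U m * (m == k.+2 :> nat)%:R)); last first.
  by move=> m _; ring.
have lt_kl := ltn_ord k.
by rewrite !sumrB -mulr_sumr !sum_mul_nat_delta //; lia.
Qed.

Lemma typeA_dualE i : e i = \sum_(j < l) (green R l.+1 i.+1 j.+1 / c) *: gamma j.
Proof.
apply: (dual_coords_inj he) => k.
rewrite he dotv_typeA_diff2 ?green0 //; last by rewrite green_id //; exact: leqW.
by rewrite green_diff2 // eqSS val_eqE; case: (k == i).
Qed.

Lemma dotv_typeA_dual i : dotv (e i) (e i) = green R l.+1 i.+1 i.+1 / c.
Proof. by rewrite {1}typeA_dualE dotv_sum_gamma_dual. Qed.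

Lemma dotv_highest_root_gamma k : dotv (\sum_(i < l) gamma i) (gamma k) =
  c * ((k == 0 :> nat)%:R + (k == l.-1 :> nat)%:R).
Proof.
pose U (m : nat) : R := c * ((0 < m) && (m <= l))%N%:R.
have -> : \sum_(i < l) gamma i = \sum_(j < l) (U j.+1 / c) *: gamma j.
  by apply: eq_bigr => j _; rewrite /U ltn_ord mulr1 mulfV // scale1r.
rewrite dotv_typeA_diff2 /U ?ltnn ?mulr0 // ltn_ord /=.
have lt_kl := ltn_ord k.
have -> : ((0 < k) && (k <= l))%N = (k != 0 :> nat) by lia.
have -> : (k.+2 <= l)%N = (k != l.-1 :> nat) by lia.
by case: eqP => _; case: eqP => _ /=; ring.
Qed.

Lemma dotv_highest_root : (0 < l)%N ->
  dotv (\sum_(i < l) gamma i) (\sum_(i < l) gamma i) = 2 * c.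
Proof.
move=> l_gt0; have sum_delta a : (a < l)%N -> \sum_(k < l) (k == a :> nat)%:R = 1 :> R.
  move=> lt_al; rewrite -[RHS](sum_mul_nat_delta (fun => 1) lt_al).
  by apply: eq_bigr => k _; rewrite mul1r.
rewrite dotv_sumr (eq_bigr _ (fun k _ => dotv_highest_root_gamma k)).
by rewrite -mulr_sumr big_split /= !sum_delta ?ltn_predL //; ring.
Qed.

Lemma dotv_barycenter_gamma k : dotv (simplex_barycenter e) (gamma k) = l.+1%:R^-1.
Proof. by rewrite /simplex_barycenter scaler_sumr (dotv_sum_dual_gamma he). Qed.

Lemma typeA_barycenterE :
  simplex_barycenter e = \sum_(j < l) (quad R l.+1 j.+1 / l.+1%:R / c) *: gamma j.
Proof.
apply: (dual_coords_inj he) => k.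
rewrite dotv_barycenter_gamma.
rewrite (dotv_typeA_diff2 (U := fun m => quad R l.+1 m / l.+1%:R)) ?quad0 ?quad_id ?mul0r //.
by rewrite mulrA -!mulrBl quad_diff2 mul1r.
Qed.

Lemma dotv_barycenter_dual i :
  dotv (simplex_barycenter e) (e i) = dotv (e i) (e i) / 2.
Proof.
rewrite typeA_barycenterE (dotv_sum_gamma_dual he) dotv_typeA_dual green_ge // /quad.
by field; rewrite c_neq0 nat1r pnatr_eq0.
Qed.

Lemma dotv_barycenter :
  dotv (simplex_barycenter e) (simplex_barycenter e) =
  l%:R * l.+2%:R / (12 * c * l.+1%:R).
Proof.
rewrite {1}typeA_barycenterE dotv_suml.
under eq_bigr do rewrite dotvC dotv_barycenter_gamma.
rewrite -mulr_suml -2!mulr_suml sum_quad.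
by field; rewrite c_neq0 nat1r pnatr_eq0.
Qed.

Lemma barycenter_in_P_Gamma (inG : pred 'I_l) :
  P_Gamma gamma (\sum_(i < l) gamma i) e inG (simplex_barycenter e).
Proof.
split; [split|] => [k | | i _]; last by rewrite dotv_barycenter_dual.
  by rewrite dotv_barycenter_gamma invr_ge0 ler0n.
rewrite dotv_sumr (eq_bigr _ (fun k _ => dotv_barycenter_gamma k)) sumr_const card_ord.
by rewrite -[_ *+ l]mulr_natr mulrC ler_pdivrMr ?ltr0n // mul1r ler_nat leqnSn.
Qed.

Lemma P_Gamma_dotv_le (psi : 'rV[R]_l) (inG : pred 'I_l) x :
  (forall i, inG i) -> P_Gamma gamma psi e inG x ->
  dotv x x <= dotv (simplex_barycenter e) (simplex_barycenter e).
Proof.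
move=> allG [[x_ge0 _] x_le]; apply: (dotv_le_dual_cone he) => // i.
by rewrite dotv_barycenter_dual; apply: x_le.
Qed.

End TypeA.

Theorem mainTheorem15 (R : rcfType) (l : nat) (hl : (0 < l)%N)
  (gamma : 'I_l -> 'rV[R]_l) (e : 'I_l -> 'rV[R]_l)
  (hA : simple_roots_typeA gamma)
  (he : forall i j : 'I_l, dotv (e j) (gamma i) = (if i == j then 1 else 0))
  (inG : pred 'I_l)
  (hG : forall i, inG i) :
  let psi := \sum_(i < l) gamma i in
  is_max_norm (P_Gamma gamma psi e inG)
    (Num.sqrt 6 / 6 * (Num.sqrt (dotv psi psi))^-1 * Num.sqrt l%:R
       * Num.sqrt (l + 2)%:R * (Num.sqrt (l + 1)%:R)^-1).
Proof.
move=> psi; case: hA => c c_gt0 hg.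
set r := (X in is_max_norm _ X).
suff -> : r = Num.sqrt (dotv (simplex_barycenter e) (simplex_barycenter e)).
  apply: is_max_norm_sqrt; first exact: (barycenter_in_P_Gamma c_gt0 hg he).
  by move=> x; apply: (P_Gamma_dotv_le c_gt0 hg he).
have r_ge0 : 0 <= r by rewrite /r !mulr_ge0 ?invr_ge0 ?sqrtr_ge0.
have -> : dotv (simplex_barycenter e) (simplex_barycenter e) = r ^+ 2.
  rewrite (dotv_barycenter c_gt0 hg he) /r !exprMn !exprVn !sqr_sqrtr ?ler0n ?dotv_ge0 //.
  rewrite (dotv_highest_root c_gt0 hg hl) addn1 addn2.
  by field; rewrite (lt0r_neq0 c_gt0) nat1r pnatr_eq0.
by rewrite (sqrtr_sqr r) ger0_norm.
Qed.
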